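(* In the social learning model (for any signal distributions satisfying the standing assumptions), there exist $c>0$ and $0<\gamma<1$ such that for all $n>0$, $$\mathbb{P}(\Xi\ge n)\le c\,\gamma^n.$$
   Context: Social learning model. A state $\theta\in\{-1,+1\}$ is drawn with $\mathbb{P}(\theta=+1)=\mathbb{P}(\theta=-1)=1/2$. Agents $t=1,2,\dots$ receive private signals $s_t\in\mathbb{R}$ that are i.i.d. conditionally on $\theta$, with CDF $F_+$ if $\theta=+1$ and $F_-$ if $\theta=-1$; $F_+$ and $F_-$ are mutually absolutely continuous. Let $L_t=\log\frac{\mathbb{P}(\theta=+1\mid s_t)}{\mathbb{P}(\theta=-1\mid s_t)}$ be the private log-likelihood ratio, and let $G_+$, $G_-$ denote the CDFs of $L_t$ conditional on $\theta=+1$, $\theta=-1$ respectively. Signals are assumed unbounded: for every $M\in\mathbb{R}$, $\mathbb{P}(L_t>M)>0$ and $\mathbb{P}(L_t<-M)>0$. Agent $t$ observes $a_1,\dots,a_{t-1}$ and her own signal and chooses $a_t\in\{-1,+1\}$ (utility $1$ if $a_t=\theta$, else $0$). The public belief is $\mu_t=\mathbb{P}(\theta=+1\mid a_1,\dots,a_{t-1})$ and $\ell_t=\log\frac{\mu_t}{1-\mu_t}$ (so $\ell_1=0$). In equilibrium $a_t=+1$ iff $\ell_t+L_t>0$, and otherwise $a_t=-1$. Consequently $\ell_{t+1}=\ell_t+D_+(\ell_t)$ if $a_t=+1$ and $\ell_{t+1}=\ell_t+D_-(\ell_t)$ if $a_t=-1$, where $D_+(x)=\log\frac{1-G_+(-x)}{1-G_-(-x)}$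 and $D_-(x)=\log\frac{G_+(-x)}{G_-(-x)}$. We write $\mathbb{P}_+(\cdot)=\mathbb{P}(\cdot\mid\theta=+1)$ and $\mathbb{E}_+$ for the corresponding expectation. There is an upset at time $t\ge2$ if $a_{t-1}\ne a_t$. $\Xi=|\{t\ge 2: a_{t-1}\ne a_t\}|$ is the total number of upsets. *)

From Stdlib Require Import Reals List.
Import ListNotations.
Open Scope R_scope.

Definition is_cdf (G : R -> R) : Prop :=
  (forall x y, x <= y -> G x <= G y) /\
  (forall x eps, 0 < eps -> exists d, 0 < d /\
       forall y, x <= y < x + d -> G y - G x < eps) /\
  (forall eps, 0 < eps -> exists M, forall x, x <= M -> G x < eps) /\
  (forall eps, 0 < eps -> exists M, forall x, M <= x -> 1 - eps < G x).

(* (Gp, Gm) are the conditional CDFs of the private log-likelihood ratio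
   L = log dF_+/dF_- (s) of a signal s with mutually absolutely continuous
   conditional laws F_+, F_- and uniform prior: this holds iff
   dG_-(l) = exp(-l) dG_+(l), which (for CDFs) is equivalent to the
   following bound on every interval (a,b]. *)
Definition llr_pair (Gp Gm : R -> R) : Prop :=
  is_cdf Gp /\ is_cdf Gm /\
  forall a b, a < b ->
    exp (- b) * (Gp b - Gp a) <= Gm b - Gm a /\
    Gm b - Gm a <= exp (- a) * (Gp b - Gp a).

(* Unbounded signals: P(L > M) > 0 and P(L < -M) > 0 for every M,
   where P = (P_+ + P_-)/2. *)
Definition unbounded_signals (Gp Gm : R -> R) : Prop :=
  (forall M, 0 < (1 - Gp M) + (1 - Gm M)) /\
  (forall M, exists x, x < - M /\ 0 < Gp x + Gm x).

(* actions: true = +1, false = -1 *)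
Definition Dplus (Gp Gm : R -> R) (x : R) : R :=
  ln ((1 - Gp (- x)) / (1 - Gm (- x))).
Definition Dminus (Gp Gm : R -> R) (x : R) : R :=
  ln (Gp (- x) / Gm (- x)).

Definition next_belief (Gp Gm : R -> R) (l : R) (a : bool) : R :=
  if a then l + Dplus Gp Gm l else l + Dminus Gp Gm l.

(* Probability, conditional on the state whose LLR-CDF is G, that the
   agents starting from public log-belief l take the actions s in order.
   Agent acts +1 iff l + L > 0, i.e. with probability 1 - G(-l). *)
Fixpoint path_prob (Gp Gm G : R -> R) (l : R) (s : list bool) : R :=
  match s with
  | [] => 1
  | a :: s' =>
      (if a then 1 - G (- l) else G (- l)) *
      path_prob Gp Gm G (next_belief Gp Gm l a) s'
  end.

Definition seq_prob (Gp Gm : R -> R) (s : list bool) : R :=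
  / 2 * path_prob Gp Gm Gp 0 s + / 2 * path_prob Gp Gm Gm 0 s.

Fixpoint upsets (s : list bool) : nat :=
  match s with
  | a :: ((b :: _) as s') => (if Bool.eqb a b then 0 else 1) + upsets s'
  | _ => 0
  end%nat.

Fixpoint all_seqs (T : nat) : list (list bool) :=
  match T with
  | O => [ [] ]
  | S T' => map (cons true) (all_seqs T') ++ map (cons false) (all_seqs T')
  end.

Definition prob_upsets_ge (Gp Gm : R -> R) (T n : nat) : R :=
  fold_right Rplus 0
    (map (seq_prob Gp Gm)
       (filter (fun s => Nat.leb n (upsets s)) (all_seqs T))).

From Stdlib Require Import Reals List Lra Lia Psatz.
Import ListNotations.
Open Scope R_scope.

(* Weigh a sequence s of actions taken from public log-belief l by
   Z_l(s) = e^l P_+(s) + P_-(s), which is (1 + e^l) times its probability.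
   Since e^l P_+(a) = e^l' P_-(a) for the updated belief l', each action
   multiplies the weight by P_-(a), so the total weight 1 + e^l is conserved;
   moreover the belief is >= 0 after a +1 and <= 0 after a -1.
   After a +1, from a belief l >= 0, the continuations containing an upset
   weigh at most 2, because at the upset the belief drops to some l' <= 0 of
   total weight 1 + e^l' <= 2 (after a -1, from l <= 0, they weigh at most
   2 e^l).  Comparing with the total weight, the tails of G_+ and G_- at 1 and
   -1 improve this to (1 - eps/2)(1 + e^l) for a fixed eps > 0.  Every upset
   puts us back in this situation, so the paths with n upsets carry at most a
   fraction (1 - eps/2)^n of the weight. *)

Lemma one_le_exp_iff x : 1 <= exp x <-> 0 <= x.
Proof.
  rewrite <- exp_0. split; intro h.
  - destruct (Rle_or_lt 0 x) as [|neg]; [assumption|].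
    pose proof (exp_increasing _ _ neg). lra.
  - destruct h as [pos|<-]; [left; apply exp_increasing, pos|right; reflexivity].
Qed.

Lemma exp_le_one_iff x : exp x <= 1 <-> x <= 0.
Proof.
  rewrite <- exp_0. split; intro h.
  - destruct (Rle_or_lt x 0) as [|pos]; [assumption|].
    pose proof (exp_increasing _ _ pos). lra.
  - destruct h as [neg| ->]; [left; apply exp_increasing, neg|right; reflexivity].
Qed.

Lemma leb_add_sub n k u : Nat.leb n (k + u) = Nat.leb (n - k) u.
Proof. apply Bool.eq_iff_eq_true. rewrite !Nat.leb_le. lia. Qed.

Lemma sum_map_app {A} (f : A -> R) (l1 l2 : list A) :
  fold_right Rplus 0 (map f (l1 ++ l2)) =
  fold_right Rplus 0 (map f l1) + fold_right Rplus 0 (map f l2).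
Proof. induction l1 as [|x l1 IH]; simpl; [ring|rewrite IH; ring]. Qed.

Lemma sum_map_scal {A} (c : R) (f : A -> R) (l : list A) :
  fold_right Rplus 0 (map (fun x => c * f x) l) = c * fold_right Rplus 0 (map f l).
Proof. induction l as [|x l IH]; simpl; [ring|rewrite IH; ring]. Qed.

Lemma sum_map_filter {A} (P : A -> bool) (f : A -> R) (l : list A) :
  fold_right Rplus 0 (map f (filter P l)) =
  fold_right Rplus 0 (map (fun x => if P x then f x else 0) l).
Proof. induction l as [|x l IH]; simpl; [ring|destruct (P x); simpl; rewrite IH; ring]. Qed.

Definition sum_seqs (T : nat) (f : list bool -> R) : R :=
  fold_right Rplus 0 (map f (all_seqs T)).

Lemma sum_seqs_succ T f :
  sum_seqs (S T) f = sum_seqs T (fun s => f (true :: s)) + sum_seqs T (fun s => f (false :: s)).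
Proof. unfold sum_seqs. simpl. rewrite sum_map_app, !map_map. reflexivity. Qed.

Lemma sum_seqs_ext T f g : (forall s, f s = g s) -> sum_seqs T f = sum_seqs T g.
Proof. intro h. unfold sum_seqs. rewrite (map_ext f g h). reflexivity. Qed.

Lemma sum_seqs_scal T c f : sum_seqs T (fun s => c * f s) = c * sum_seqs T f.
Proof. apply sum_map_scal. Qed.

Lemma nonneg_of_left_tail (G H : R -> R) :
  (forall x y, x <= y -> G x <= G y) ->
  (forall eps, 0 < eps -> exists M, forall x, x <= M -> H x < eps) ->
  (forall M, exists x, x < - M /\ 0 < G x + H x) ->
  forall x, 0 <= G x.
Proof.
  intros mono low pos x. destruct (Rle_or_lt 0 (G x)) as [|neg]; [assumption|].
  destruct (low (- G x)) as [M HM]; [lra|].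
  destruct (pos (Rmax (- x) (- M))) as [y [hy hsum]].
  pose proof (Rmax_l (- x) (- M)). pose proof (Rmax_r (- x) (- M)).
  pose proof (mono y x ltac:(lra)). pose proof (HM y ltac:(lra)). lra.
Qed.

Lemma le_1_of_right_tail (G H : R -> R) :
  (forall x y, x <= y -> G x <= G y) ->
  (forall eps, 0 < eps -> exists M, forall x, M <= x -> 1 - eps < H x) ->
  (forall M, 0 < (1 - G M) + (1 - H M)) ->
  forall x, G x <= 1.
Proof.
  intros mono up pos x. destruct (Rle_or_lt (G x) 1) as [|big]; [assumption|].
  destruct (up (G x - 1)) as [M HM]; [lra|].
  pose proof (mono x (Rmax x M) (Rmax_l _ _)). pose proof (HM (Rmax x M) (Rmax_r _ _)).
  pose proof (pos (Rmax x M)). lra.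
Qed.

Definition act_prob (G : R -> R) (l : R) (a : bool) : R :=
  if a then 1 - G (- l) else G (- l).

Lemma act_prob_sum G l : act_prob G l true + act_prob G l false = 1.
Proof. simpl. ring. Qed.

Definition agrees_with (l : R) (a : bool) : Prop := if a then 0 <= l else l <= 0.

Section Upsets.

Variables Gp Gm : R -> R.
Hypothesis Hllr : llr_pair Gp Gm.
Hypothesis Hunb : unbounded_signals Gp Gm.

Lemma Gp_mono x y : x <= y -> Gp x <= Gp y.
Proof. destruct Hllr as ([mono _] & _ & _). auto. Qed.

Lemma Gm_mono x y : x <= y -> Gm x <= Gm y.
Proof. destruct Hllr as (_ & [mono _] & _). auto. Qed.

Lemma llr_interval a b : a < b ->
  exp (- b) * (Gp b - Gp a) <= Gm b - Gm a /\ Gm b - Gm a <= exp (- a) * (Gp b - Gp a).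
Proof. destruct Hllr as (_ & _ & I). auto. Qed.

Lemma G_nonneg x : 0 <= Gp x /\ 0 <= Gm x.
Proof.
  destruct Hllr as ([mono_p [_ [low_p _]]] & [mono_m [_ [low_m _]]] & _).
  destruct Hunb as [_ pos].
  split; [apply (nonneg_of_left_tail Gp Gm)|apply (nonneg_of_left_tail Gm Gp)]; auto.
  intro M. destruct (pos M) as [y [hy hs]]. exists y. split; lra.
Qed.

Lemma G_le_1 x : Gp x <= 1 /\ Gm x <= 1.
Proof.
  destruct Hllr as ([mono_p [_ [_ up_p]]] & [mono_m [_ [_ up_m]]] & _).
  destruct Hunb as [pos _].
  split; [apply (le_1_of_right_tail Gp Gm)|apply (le_1_of_right_tail Gm Gp)]; auto.
  intro M. pose proof (pos M). lra.
Qed.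

Lemma exp_Gp_le_Gm x : exp (- x) * Gp x <= Gm x.
Proof.
  destruct Hllr as ([_ [_ [low_p _]]] & _ & _).
  apply Rle_plus_epsilon. intros eps heps.
  destruct (low_p (eps * exp x)) as [M HM]; [apply Rmult_lt_0_compat; [lra|apply exp_pos]|].
  set (a := Rmin M (x - 1)).
  assert (ha : a < x) by (pose proof (Rmin_r M (x - 1)); unfold a; lra).
  destruct (llr_interval a x ha) as [I _].
  pose proof (HM a (Rmin_l _ _)). pose proof (proj2 (G_nonneg a)).
  assert (inv : exp (- x) * exp x = 1) by (rewrite <- exp_plus, Rplus_opp_l; apply exp_0).
  assert (exp (- x) * Gp a <= exp (- x) * (eps * exp x))
    by (apply Rmult_le_compat_l; [left; apply exp_pos|lra]).
  replace (exp (- x) * (eps * exp x)) with (eps * (exp (- x) * exp x)) in * by ring.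
  rewrite inv in *. lra.
Qed.

Lemma one_sub_Gm_le x : 1 - Gm x <= exp (- x) * (1 - Gp x).
Proof.
  destruct Hllr as (_ & [_ [_ [_ up_m]]] & _).
  apply Rle_plus_epsilon. intros eps heps.
  destruct (up_m eps heps) as [M HM].
  set (b := Rmax M (x + 1)).
  assert (hb : x < b) by (pose proof (Rmax_r M (x + 1)); unfold b; lra).
  destruct (llr_interval x b hb) as [_ I].
  pose proof (HM b (Rmax_l _ _)). pose proof (proj1 (G_le_1 b)).
  assert (exp (- x) * (Gp b - Gp x) <= exp (- x) * (1 - Gp x))
    by (apply Rmult_le_compat_l; [left; apply exp_pos|lra]).
  lra.
Qed.

Lemma G_pos x : 0 < Gp x /\ 0 < Gm x.
Proof.
  destruct Hllr as (_ & [_ [_ [low_m _]]] & _). destruct Hunb as [_ pos].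
  destruct (G_nonneg x) as [nn_p nn_m].
  assert (hm : 0 < Gm x).
  { destruct (pos (- x)) as [y [hy hs]].
    pose proof (Gp_mono y x ltac:(lra)). pose proof (Gm_mono y x ltac:(lra)).
    pose proof (exp_Gp_le_Gm x). pose proof (exp_pos (- x)). nra. }
  split; [|exact hm].
  destruct (Rle_lt_or_eq_dec _ _ nn_p) as [|zero]; [assumption|exfalso].
  destruct (low_m (Gm x) hm) as [M HM].
  set (a := Rmin M (x - 1)).
  assert (ha : a < x) by (pose proof (Rmin_r M (x - 1)); unfold a; lra).
  destruct (llr_interval a x ha) as [_ I].
  pose proof (HM a (Rmin_l _ _)).
  pose proof (proj1 (G_nonneg a)). pose proof (Gp_mono a x (Rlt_le _ _ ha)).
  replace (Gp x - Gp a) with 0 in I by lra. lra.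
Qed.

Lemma G_lt_1 x : Gp x < 1 /\ Gm x < 1.
Proof.
  destruct Hllr as ([_ [_ [_ up_p]]] & _ & _). destruct Hunb as [pos _].
  destruct (G_le_1 x) as [le_p le_m].
  assert (hp : Gp x < 1).
  { destruct (Rle_lt_or_eq_dec _ _ le_p) as [|one]; [assumption|exfalso].
    pose proof (one_sub_Gm_le x) as h. rewrite one, Rminus_diag, Rmult_0_r in h.
    pose proof (pos x). lra. }
  split; [exact hp|].
  destruct (Rle_lt_or_eq_dec _ _ le_m) as [|one]; [assumption|exfalso].
  destruct (up_p (1 - Gp x)) as [M HM]; [lra|].
  set (b := Rmax M (x + 1)).
  assert (hb : x < b) by (pose proof (Rmax_r M (x + 1)); unfold b; lra).
  destruct (llr_interval x b hb) as [I _].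
  pose proof (HM b (Rmax_l _ _)). pose proof (proj2 (G_le_1 b)).
  assert (0 < exp (- b) * (Gp b - Gp x)) by (apply Rmult_lt_0_compat; [apply exp_pos|lra]).
  lra.
Qed.

Lemma Gp_lt_Gm z : z <> 0 -> Gp z < Gm z.
Proof.
  intro hz. destruct (G_pos z), (G_lt_1 z).
  destruct (Rlt_or_le z 0) as [neg|nonneg].
  - pose proof (exp_increasing 0 (- z) ltac:(lra)). rewrite exp_0 in *.
    pose proof (exp_Gp_le_Gm z). nra.
  - pose proof (exp_increasing (- z) 0 ltac:(lra)). rewrite exp_0 in *.
    pose proof (one_sub_Gm_le z). nra.
Qed.

Definition kappa_plus : R := Gm 1 - Gp 1.
Definition kappa_minus : R := Gm (-1) - Gp (-1).

Lemma upper_tail_gap l : 0 <= l ->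
  kappa_plus * exp l <= exp l * act_prob Gp l true - act_prob Gm l true.
Proof.
  intro hl. unfold kappa_plus, act_prob.
  destruct (llr_interval (- l) 1 ltac:(lra)) as [_ I]. rewrite Ropp_involutive in I.
  pose proof (proj2 (one_le_exp_iff l) hl). pose proof (proj2 (G_le_1 1)).
  assert (0 <= (exp l - 1) * (1 - Gm 1)) by (apply Rmult_le_pos; lra).
  lra.
Qed.

Lemma lower_tail_gap l : l <= 0 ->
  kappa_minus <= act_prob Gm l false - exp l * act_prob Gp l false.
Proof.
  intro hl. unfold kappa_minus, act_prob.
  destruct (llr_interval (-1) (- l) ltac:(lra)) as [I _]. rewrite Ropp_involutive in I.
  pose proof (proj2 (exp_le_one_iff l) hl). pose proof (proj1 (G_nonneg (-1))).
  assert (0 <= (1 - exp l) * Gp (-1)) by (apply Rmult_le_pos; lra).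
  lra.
Qed.

Definition gap : R := Rmin kappa_plus kappa_minus.
Definition decay : R := 1 - gap / 2.

Lemma gap_bounds : 0 < gap /\ gap <= kappa_plus /\ gap <= kappa_minus /\ gap < 1.
Proof.
  pose proof (Gp_lt_Gm 1 ltac:(lra)). pose proof (Gp_lt_Gm (-1) ltac:(lra)).
  pose proof (G_pos 1). pose proof (G_lt_1 1).
  pose proof (Rmin_l kappa_plus kappa_minus). pose proof (Rmin_r kappa_plus kappa_minus).
  unfold gap, kappa_plus, kappa_minus in *.
  repeat split; try apply Rmin_glb_lt; lra.
Qed.

Lemma decay_bounds : 0 < decay < 1.
Proof. pose proof gap_bounds. unfold decay. lra. Qed.

Lemma act_prob_pos l a : 0 < act_prob Gp l a /\ 0 < act_prob Gm l a.
Proof. destruct (G_pos (- l)), (G_lt_1 (- l)). destruct a; simpl; lra. Qed.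

Lemma exp_next_belief l a :
  exp (next_belief Gp Gm l a) * act_prob Gm l a = exp l * act_prob Gp l a.
Proof.
  destruct (act_prob_pos l a) as [pp pm].
  assert (E : next_belief Gp Gm l a = l + ln (act_prob Gp l a / act_prob Gm l a))
    by (destruct a; reflexivity).
  rewrite E, exp_plus, exp_ln by (apply Rdiv_lt_0_compat; assumption).
  field. lra.
Qed.

Lemma next_belief_agrees l a : agrees_with (next_belief Gp Gm l a) a.
Proof.
  pose proof (exp_next_belief l a) as E. destruct (act_prob_pos l a) as [pp pm].
  destruct a; simpl.
  - apply one_le_exp_iff. pose proof (one_sub_Gm_le (- l)) as h.
    rewrite Ropp_involutive in h. simpl in E, pp, pm. nra.
  - apply exp_le_one_iff. pose proof (exp_Gp_le_Gm (- l)) as h.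
    rewrite Ropp_involutive in h. simpl in E, pp, pm. nra.
Qed.

Definition act_mean (l : R) (f : bool -> R) : R :=
  act_prob Gm l true * f true + act_prob Gm l false * f false.

Lemma act_mean_le l f g : (forall a, f a <= g a) -> act_mean l f <= act_mean l g.
Proof.
  intro h. unfold act_mean.
  destruct (act_prob_pos l true) as [_ p1], (act_prob_pos l false) as [_ p2].
  apply Rplus_le_compat; apply Rmult_le_compat_l; auto; lra.
Qed.

Lemma act_mean_const l k : act_mean l (fun _ => k) = k.
Proof. unfold act_mean. rewrite <- Rmult_plus_distr_r, act_prob_sum. ring. Qed.

Lemma act_mean_scal l k f : act_mean l (fun a => k * f a) = k * act_mean l f.
Proof. unfold act_mean. ring. Qed.

Lemma act_mean_exp l : act_mean l (fun a => exp (next_belief Gp Gm l a)) = exp l.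
Proof.
  unfold act_mean. rewrite !(Rmult_comm (act_prob Gm l _)), !exp_next_belief.
  rewrite <- Rmult_plus_distr_l, act_prob_sum. ring.
Qed.

Lemma act_mean_mass l : act_mean l (fun a => 1 + exp (next_belief Gp Gm l a)) = 1 + exp l.
Proof.
  rewrite <- (act_mean_const l 1), <- act_mean_exp at 1. unfold act_mean. ring.
Qed.

(* (1 + e^l) times the probability of the actions s when the public
   log-belief is l, i.e. the prior is e^l/(1 + e^l). *)
Definition path_mass (l : R) (s : list bool) : R :=
  exp l * path_prob Gp Gm Gp l s + path_prob Gp Gm Gm l s.

Lemma path_mass_cons l a s :
  path_mass l (a :: s) = act_prob Gm l a * path_mass (next_belief Gp Gm l a) s.
Proof.
  unfold path_mass. simpl path_prob. fold (act_prob Gp l a) (act_prob Gm l a).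
  rewrite Rmult_plus_distr_l, <- !Rmult_assoc, <- exp_next_belief. ring.
Qed.

Definition upset_mass (T n : nat) (l : R) (a : bool) : R :=
  sum_seqs T (fun s => if Nat.leb n (upsets (a :: s)) then path_mass l s else 0).

Lemma upset_mass_succ T n l a :
  upset_mass (S T) n l a =
  act_mean l (fun c => upset_mass T (n - upsets [a; c]) (next_belief Gp Gm l c) c).
Proof.
  assert (split : forall c s, upsets (a :: c :: s) = (upsets [a; c] + upsets (c :: s))%nat)
    by (intros; destruct a, c; reflexivity).
  unfold upset_mass at 1. rewrite sum_seqs_succ. unfold act_mean, upset_mass.
  rewrite <- !sum_seqs_scal.
  f_equal; apply sum_seqs_ext; intro s;
    rewrite split, leb_add_sub, path_mass_cons; destruct (Nat.leb _ _); ring.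
Qed.

Lemma upset_mass_0 T l a : upset_mass T 0 l a = 1 + exp l.
Proof.
  induction T as [|T IH] in l, a |- *.
  - unfold upset_mass, sum_seqs, path_mass. simpl. ring.
  - rewrite upset_mass_succ, <- act_mean_mass. unfold act_mean. simpl Nat.sub.
    rewrite !IH. reflexivity.
Qed.

Lemma upset_mass_nil n l a : (0 < n)%nat -> upset_mass 0 n l a = 0.
Proof. intro hn. destruct n as [|n]; [lia|]. unfold upset_mass, sum_seqs. simpl. ring. Qed.

Lemma upset_mass_1_true T l : upset_mass T 1 l true <= 2.
Proof.
  induction T as [|T IH] in l |- *.
  - rewrite upset_mass_nil by lia. lra.
  - rewrite upset_mass_succ. apply Rle_trans with (act_mean l (fun _ => 2));
      [|rewrite act_mean_const; lra].
    apply act_mean_le. intros [|]; simpl Nat.sub; [apply IH|].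
    rewrite upset_mass_0. pose proof (next_belief_agrees l false) as h.
    apply exp_le_one_iff in h. lra.
Qed.

Lemma upset_mass_1_false T l : upset_mass T 1 l false <= 2 * exp l.
Proof.
  induction T as [|T IH] in l |- *.
  - rewrite upset_mass_nil by lia. pose proof (exp_pos l). lra.
  - rewrite upset_mass_succ, <- (act_mean_exp l), <- act_mean_scal.
    apply act_mean_le. intros [|]; simpl Nat.sub; [|apply IH].
    rewrite upset_mass_0. pose proof (next_belief_agrees l true) as h.
    apply one_le_exp_iff in h. lra.
Qed.

Lemma upset_mass_1_agrees T l a : agrees_with l a -> upset_mass T 1 l a <= decay * (1 + exp l).
Proof.
  intro hl. pose proof gap_bounds as (g0 & g_plus & g_minus & g1).
  pose proof (exp_pos l). pose proof (act_mean_mass l) as mass.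
  destruct T as [|T].
  { rewrite upset_mass_nil by lia. pose proof decay_bounds. nra. }
  rewrite upset_mass_succ. unfold act_mean, decay in *.
  destruct (act_prob_pos l true) as [_ pt], (act_prob_pos l false) as [_ pf].
  destruct a; simpl Nat.sub; simpl in hl; rewrite upset_mass_0.
  - pose proof (upset_mass_1_true T (next_belief Gp Gm l true)).
    pose proof (exp_next_belief l true). pose proof (upper_tail_gap l hl).
    pose proof (proj2 (one_le_exp_iff l) hl).
    assert (gap * exp l <= kappa_plus * exp l) by (apply Rmult_le_compat_r; lra).
    assert (act_prob Gm l true * upset_mass T 1 (next_belief Gp Gm l true) true <=
            act_prob Gm l true * 2) by (apply Rmult_le_compat_l; lra).
    nra.
  - pose proof (upset_mass_1_false T (next_belief Gp Gm l false)).
    pose proof (exp_next_belief l false). pose proof (lower_tail_gap l hl).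
    pose proof (proj2 (exp_le_one_iff l) hl).
    assert (act_prob Gm l false * upset_mass T 1 (next_belief Gp Gm l false) false <=
            act_prob Gm l false * (2 * exp (next_belief Gp Gm l false)))
      by (apply Rmult_le_compat_l; lra).
    nra.
Qed.

Lemma upset_mass_tail_of_geometric m :
  (forall T l a, upset_mass T (S m) l a <= decay ^ m * upset_mass T 1 l a) ->
  forall T l a, agrees_with l a -> upset_mass T (S m) l a <= decay ^ S m * (1 + exp l).
Proof.
  intros geom T l a hl. eapply Rle_trans; [apply geom|].
  simpl pow. rewrite (Rmult_comm decay), Rmult_assoc.
  apply Rmult_le_compat_l; [pose proof decay_bounds; apply pow_le; lra|].
  apply upset_mass_1_agrees, hl.
Qed.

Lemma upset_mass_geometric m T l a :
  upset_mass T (S m) l a <= decay ^ m * upset_mass T 1 l a.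
Proof.
  induction m as [|m IHm] in T, l, a |- *; [simpl; lra|].
  pose proof (upset_mass_tail_of_geometric m IHm) as tail.
  induction T as [|T IHT] in l, a |- *.
  { rewrite !upset_mass_nil by lia. lra. }
  rewrite !upset_mass_succ, <- act_mean_scal. apply act_mean_le. intro c.
  destruct a, c; simpl Nat.sub; try apply IHT;
    rewrite upset_mass_0; apply tail, next_belief_agrees.
Qed.

Lemma upset_mass_tail m T l a :
  agrees_with l a -> upset_mass T (S m) l a <= decay ^ S m * (1 + exp l).
Proof. apply upset_mass_tail_of_geometric, upset_mass_geometric. Qed.

Lemma seq_prob_path_mass s : seq_prob Gp Gm s = / 2 * path_mass 0 s.
Proof. unfold seq_prob, path_mass. rewrite exp_0. ring. Qed.

Lemma prob_upsets_ge_succ T n :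
  prob_upsets_ge Gp Gm (S T) n =
  / 2 * act_mean 0 (fun c => upset_mass T n (next_belief Gp Gm 0 c) c).
Proof.
  unfold prob_upsets_ge. rewrite sum_map_filter.
  fold (sum_seqs (S T) (fun s => if Nat.leb n (upsets s) then seq_prob Gp Gm s else 0)).
  rewrite sum_seqs_succ. unfold act_mean, upset_mass.
  rewrite Rmult_plus_distr_l, <- !Rmult_assoc, <- !sum_seqs_scal.
  f_equal; apply sum_seqs_ext; intro s;
    rewrite seq_prob_path_mass, path_mass_cons; destruct (Nat.leb _ _); ring.
Qed.

Lemma prob_upsets_ge_bound T m : prob_upsets_ge Gp Gm T (S m) <= decay ^ S m.
Proof.
  pose proof decay_bounds.
  destruct T as [|T].
  { replace (prob_upsets_ge Gp Gm 0 (S m)) with 0 by reflexivity. apply pow_le. lra. }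
  rewrite prob_upsets_ge_succ.
  apply Rle_trans with
    (/ 2 * act_mean 0 (fun c => decay ^ S m * (1 + exp (next_belief Gp Gm 0 c)))).
  - apply Rmult_le_compat_l; [lra|]. apply act_mean_le. intro c.
    apply upset_mass_tail, next_belief_agrees.
  - rewrite act_mean_scal, act_mean_mass, exp_0. lra.
Qed.

End Upsets.

Theorem proposition1 :
  forall Gp Gm : R -> R,
    llr_pair Gp Gm ->
    unbounded_signals Gp Gm ->
    exists c gamma : R,
      0 < c /\ 0 < gamma < 1 /\
      forall n : nat, (0 < n)%nat ->
        forall T : nat, prob_upsets_ge Gp Gm T n <= c * gamma ^ n.
Proof.
  intros Gp Gm Hllr Hunb.
  exists 1, (decay Gp Gm). split; [lra|]. split; [apply decay_bounds; assumption|].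
  intros [|m] hn T; [lia|].
  rewrite Rmult_1_l. apply prob_upsets_ge_bound; assumption.
Qed.
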